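(* Let $0\le\gamma_1<\dots<\gamma_p\le1$, $\boldsymbol\alpha=(\alpha_1,\dots,\alpha_p)\in(0,1)^p$ with $\sum_i\alpha_i=1$, and for each $i$ let $(\gamma_{i,n})_n$ be $[0,1]$-valued with $|\gamma_{i,n}-\gamma_i|=O(1/n)$. Let $\phi_{n,\boldsymbol\alpha,\boldsymbol\gamma_n}(u)=\sum_{i=1}^p\alpha_i\phi_{n,\gamma_{i,n}}(u)$. Then for every $i\in\{1,\dots,p\}$ there exists $\delta_i>0$ such that, whenever $\gamma_i-\delta_i<a<b<\gamma_i$ or $\gamma_i<b<a<\gamma_i+\delta_i$ (with $a,b\in(0,1)$), $\phi_{n,\boldsymbol\alpha,\boldsymbol\gamma_n}'(a)/\phi_{n,\boldsymbol\alpha,\boldsymbol\gamma_n}'(b)\to0$ as $n\to\infty$.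
   Context: $[x]$ is the integer part. $\phi_{n,\alpha}(t)=\sum_{j=1+[(n-1)\alpha]}^n\binom{n}{j}t^j(1-t)^{n-j}$, $t\in[0,1]$. *)

From Stdlib Require Import Reals ZArith Arith.
From Coquelicot Require Import Coquelicot.
Open Scope R_scope.

Definition phi_lo (n : nat) (alpha : R) : nat :=
  Z.to_nat (1 + Int_part ((INR n - 1) * alpha))%Z.

Definition phi (n : nat) (alpha : R) (t : R) : R :=
  sum_f_R0 (fun j => if Nat.leb (phi_lo n alpha) j
                     then Binomial.C n j * t ^ j * (1 - t) ^ (n - j)
                     else 0) n.

(* Mixture phi_{n, alpha, gamma_n}(u) = sum_{i<p} alpha_i phi_{n, gamma_{i,n}}(u)
   (indices 0..p-1 instead of 1..p). *)
Definition phi_mix (p : nat) (alpha : nat -> R) (gn : nat -> nat -> R)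
  (n : nat) (u : R) : R :=
  sum_f_R0 (fun i => alpha i * phi n (gn i n) u) (p - 1).

From Stdlib Require Import Reals ZArith Arith Lra Lia.
From Coquelicot Require Import Coquelicot.
Open Scope R_scope.

(* With c = [(n-1) g], the tail phi_{n,g}(t) = P(Bin(n,t) > c) has derivative
   n B_{n-1,c}(t), where B_{m,c}(t) = C(m,c) t^c (1-t)^(m-c) is a Bernstein
   polynomial: the term-wise derivatives of the binomial sum telescope.  Hence
   the derivative of the mixture is n sum_j alpha_j B_{n-1,c_j}(t), and its
   ratio at a and b is at most sum_j (alpha_j/alpha_i) B_{c_j}(a)/B_{c_i}(b).
   It thus suffices that each of these finitely many ratios tends to 0.

   Two estimates on the Bernstein basis do the work: exponential tilting,
   B_c(u) <= B_c(v) exp((u-v)(c-mv)/(v(1-v))), and the mode bound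
   1 <= (m+1) B_c(c/m).  Since c_j = (n-1) gamma_j + O(1), the term j = i is
   at most n exp(K - kappa n) because b lies strictly between a and gamma_i;
   for j <> i the upper bound at a (tilted from the midpoint of a and gamma_j)
   decays like exp(-n (a - gamma_j)^2), while the lower bound at b loses only
   exp(-n (gamma_i - b)^2/(b(1-b))), which is smaller once delta is chosen
   small compared with the gap between gamma_i and the other gamma_j. *)

Definition bern (m c : nat) (t : R) : R :=
  Binomial.C m c * t ^ c * (1 - t) ^ (m - c).

(* B_{m,j-1}(t), extended by 0 outside 1 <= j <= m+1: the index shift that
   appears when differentiating the terms of a degree-(m+1) binomial sum. *)
Definition bern_shift (m j : nat) (t : R) : R :=
  match j with O => 0 | S c => if Nat.leb c m then bern m c t else 0 end.

Lemma bern_shift_succ m c t : (c <= m)%nat -> bern_shift m (S c) t = bern m c t.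
Proof. intros Hc. unfold bern_shift. rewrite (proj2 (Nat.leb_le c m) Hc). reflexivity. Qed.

Lemma bern_shift_beyond m t : bern_shift m (S (S m)) t = 0.
Proof. unfold bern_shift. rewrite (proj2 (Nat.leb_gt (S m) m)) by lia. reflexivity. Qed.

Lemma binom_absorb_lower m j : (j <= m)%nat ->
  INR (S j) * Binomial.C (S m) (S j) = INR (S m) * Binomial.C m j.
Proof.
intros Hj. unfold Binomial.C. replace (S m - S j)%nat with (m - j)%nat by lia.
rewrite !fact_simpl, !mult_INR.
pose proof (INR_fact_neq_0 m). pose proof (INR_fact_neq_0 j).
pose proof (INR_fact_neq_0 (m - j)). pose proof (pos_INR j).
field. repeat split; auto. rewrite S_INR; lra.
Qed.

Lemma binom_absorb_upper m j : (j <= m)%nat ->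
  INR (S m - j) * Binomial.C (S m) j = INR (S m) * Binomial.C m j.
Proof.
intros Hj. unfold Binomial.C. replace (S m - j)%nat with (S (m - j)) by lia.
rewrite !fact_simpl, !mult_INR.
pose proof (INR_fact_neq_0 m). pose proof (INR_fact_neq_0 j).
pose proof (INR_fact_neq_0 (m - j)). pose proof (pos_INR (m - j)).
field. repeat split; auto. rewrite S_INR; lra.
Qed.

(* The two halves of the derivative of a degree-(m+1) basis term:
   differentiating t^j gives (m+1) B_{m,j-1}, differentiating (1-t)^(m+1-j)
   gives -(m+1) B_{m,j}. *)
Lemma bern_shift_lower m j t : (j <= S m)%nat ->
  Binomial.C (S m) j * (INR j * t ^ pred j) * (1 - t) ^ (S m - j) =
  INR (S m) * bern_shift m j t.
Proof.
intros Hj. destruct j as [|j]; [simpl; ring|].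
rewrite bern_shift_succ by lia. unfold bern.
replace (S m - S j)%nat with (m - j)%nat by lia. simpl pred.
transitivity (INR (S j) * Binomial.C (S m) (S j) * t ^ j * (1 - t) ^ (m - j)); [ring|].
rewrite binom_absorb_lower by lia. ring.
Qed.

Lemma bern_shift_upper m j t : (j <= S m)%nat ->
  Binomial.C (S m) j * t ^ j * (INR (S m - j) * (1 - t) ^ pred (S m - j)) =
  INR (S m) * bern_shift m (S j) t.
Proof.
intros Hj. destruct (Nat.eq_dec j (S m)) as [->|Hne].
- rewrite Nat.sub_diag, bern_shift_beyond. simpl. ring.
- rewrite bern_shift_succ by lia. unfold bern.
  replace (pred (S m - j)) with (m - j)%nat by lia.
  transitivity (INR (S m - j) * Binomial.C (S m) j * t ^ j * (1 - t) ^ (m - j)); [ring|].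
  rewrite binom_absorb_upper by lia. ring.
Qed.

Lemma bern_term_derive m j t : (j <= S m)%nat ->
  is_derive (fun t => Binomial.C (S m) j * t ^ j * (1 - t) ^ (S m - j)) t
    (INR (S m) * bern_shift m j t - INR (S m) * bern_shift m (S j) t).
Proof.
intros Hj. rewrite <- (bern_shift_lower m j t Hj), <- (bern_shift_upper m j t Hj).
generalize (S m - j)%nat as k. intros k. auto_derive; [exact I|]. unfold Rminus. ring.
Qed.

Lemma telescope_from (f : nat -> R) k N :
  sum_f_R0 (fun j => if Nat.leb k j then f j - f (S j) else 0) N =
  if Nat.leb k N then f k - f (S N) else 0.
Proof.
induction N as [|N IH].
- simpl. destruct k; simpl; ring.
- rewrite tech5, IH. cbv beta.
  destruct (Nat.leb k N) eqn:E.
  + apply Nat.leb_le in E. rewrite (proj2 (Nat.leb_le k (S N))) by lia. ring.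
  + apply Nat.leb_gt in E. destruct (Nat.eq_dec k (S N)) as [->|Hne].
    * rewrite Nat.leb_refl. ring.
    * rewrite (proj2 (Nat.leb_gt k (S N))) by lia. ring.
Qed.

(* The upper binomial tail  sum_{j > c} C(m+1,j) t^j (1-t)^(m+1-j)  has
   derivative (m+1) B_{m,c}(t): the term-wise derivatives telescope. *)
Lemma binom_tail_derive m c t : (c <= m)%nat ->
  is_derive (fun t => sum_f_R0 (fun j => if Nat.leb (S c) j
        then Binomial.C (S m) j * t ^ j * (1 - t) ^ (S m - j) else 0) (S m)) t
    (INR (S m) * bern m c t).
Proof.
intros Hc.
set (F := fun j => INR (S m) * bern_shift m j t).
assert (Hsum : sum_f_R0 (fun j => if Nat.leb (S c) j then F j - F (S j) else 0) (S m) =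
               INR (S m) * bern m c t).
{ rewrite telescope_from, (proj2 (Nat.leb_le (S c) (S m))) by lia. unfold F.
  rewrite bern_shift_succ, bern_shift_beyond by exact Hc. ring. }
rewrite <- Hsum, <- sum_n_Reals.
eapply is_derive_ext; [intros x; apply sum_n_Reals|].
apply (is_derive_sum_n (fun j x => if Nat.leb (S c) j
        then Binomial.C (S m) j * x ^ j * (1 - x) ^ (S m - j) else 0)).
intros j Hj. destruct (Nat.leb (S c) j).
- apply bern_term_derive. exact Hj.
- apply (is_derive_const 0).
Qed.

(* c = [(n-1) g], so that phi n g sums the binomial terms j >= c + 1. *)
Definition floor_index (n : nat) (g : R) : nat :=
  Z.to_nat (Int_part ((INR n - 1) * g)).

Lemma floor_index_spec m g : 0 <= g <= 1 ->
  phi_lo (S m) g = S (floor_index (S m) g) /\ (floor_index (S m) g <= m)%nat /\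
  Rabs (INR (floor_index (S m) g) - INR m * g) <= 1.
Proof.
intros Hg. unfold phi_lo, floor_index.
replace (INR (S m) - 1) with (INR m) by (rewrite S_INR; ring).
set (x := INR m * g).
assert (Hx : 0 <= x <= INR m) by (unfold x; pose proof (pos_INR m); nra).
destruct (base_Int_part x) as [Hlow Hup].
set (z := Int_part x) in *.
assert (Hz : (0 <= z)%Z).
{ assert (Hz1 : IZR (-1) < IZR z) by lra. apply lt_IZR in Hz1. lia. }
assert (Hzn : IZR z = INR (Z.to_nat z)) by (rewrite INR_IZR_INZ, Z2Nat.id; auto).
split; [|split].
- lia.
- apply INR_le. lra.
- rewrite <- Hzn. apply Rabs_le. lra.
Qed.

Lemma phi_derive m g t : 0 <= g <= 1 ->
  is_derive (phi (S m) g) t (INR (S m) * bern m (floor_index (S m) g) t).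
Proof.
intros Hg. destruct (floor_index_spec m g Hg) as [Hlo [Hc _]].
unfold phi. rewrite Hlo. apply binom_tail_derive. exact Hc.
Qed.

Lemma mix_derive p alpha gn m u :
  (forall i, (i <= p - 1)%nat -> 0 <= gn i (S m) <= 1) ->
  Derive (phi_mix p alpha gn (S m)) u =
  INR (S m) * sum_f_R0 (fun i => alpha i * bern m (floor_index (S m) (gn i (S m))) u) (p - 1).
Proof.
intros Hg. apply is_derive_unique. unfold phi_mix.
rewrite scal_sum, <- sum_n_Reals.
eapply is_derive_ext; [intros x; apply sum_n_Reals|].
apply (is_derive_sum_n (fun i x => alpha i * phi (S m) (gn i (S m)) x)).
intros i Hi. replace (alpha i * bern m _ u * INR (S m))
  with (alpha i * (INR (S m) * bern m (floor_index (S m) (gn i (S m))) u)) by ring.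
apply is_derive_scal, phi_derive, Hg. exact Hi.
Qed.

Lemma sum_nonneg (f : nat -> R) N :
  (forall i, (i <= N)%nat -> 0 <= f i) -> 0 <= sum_f_R0 f N.
Proof.
induction N as [|N IH]; intros Hf; simpl.
- apply Hf. lia.
- pose proof (Hf (S N) (Nat.le_refl _)).
  assert (0 <= sum_f_R0 f N) by (apply IH; intros; apply Hf; lia). lra.
Qed.

Lemma sum_ge_term (f : nat -> R) N c :
  (forall i, (i <= N)%nat -> 0 <= f i) -> (c <= N)%nat -> f c <= sum_f_R0 f N.
Proof.
induction N as [|N IH]; intros Hf Hc.
- replace c with 0%nat by lia. simpl. lra.
- rewrite tech5. destruct (Nat.eq_dec c (S N)) as [->|Hne].
  + assert (0 <= sum_f_R0 f N) by (apply sum_nonneg; intros; apply Hf; lia). lra.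
  + assert (f c <= sum_f_R0 f N) by (apply IH; [intros; apply Hf|]; lia).
    pose proof (Hf (S N) (Nat.le_refl _)). lra.
Qed.

Lemma binom_pos m c : 0 < Binomial.C m c.
Proof.
unfold Binomial.C. apply Rdiv_lt_0_compat.
- apply lt_0_INR, lt_O_fact.
- apply Rmult_lt_0_compat; apply lt_0_INR, lt_O_fact.
Qed.

Lemma bern_pos m c u : 0 < u < 1 -> 0 < bern m c u.
Proof.
intros Hu. unfold bern. pose proof (binom_pos m c).
apply Rmult_lt_0_compat; [apply Rmult_lt_0_compat|]; auto; apply pow_lt; lra.
Qed.

Lemma bern_nonneg m c u : 0 <= u <= 1 -> 0 <= bern m c u.
Proof.
intros Hu. unfold bern. pose proof (binom_pos m c).
apply Rmult_le_pos; [apply Rmult_le_pos|]; try lra; apply pow_le; lra.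
Qed.

Lemma bern_partition m u : sum_f_R0 (fun c => bern m c u) m = 1.
Proof.
unfold bern. rewrite <- binomial. replace (u + (1 - u)) with 1 by ring. apply pow1.
Qed.

Lemma bern_le_1 m c u : 0 <= u <= 1 -> (c <= m)%nat -> bern m c u <= 1.
Proof.
intros Hu Hc. rewrite <- (bern_partition m u).
apply (sum_ge_term (fun c => bern m c u)); auto.
intros; apply bern_nonneg; auto.
Qed.

Lemma bern_succ_ratio m c u : (c < m)%nat ->
  bern m (S c) u * (INR (S c) * (1 - u)) = bern m c u * (INR (m - c) * u).
Proof.
intros Hc. unfold bern. rewrite pascal_step3 by auto.
replace (m - c)%nat with (S (m - S c)) at 2 by lia.
assert (INR (S c) <> 0) by (apply not_0_INR; lia).
simpl pow. field. auto.
Qed.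

(* Unimodality: at y = c/m the sequence k |-> B_{m,k}(y) increases up to k = c
   and decreases afterwards. *)
Section Mode.
Variables (m c : nat) (y : R).
Hypotheses (Hy : 0 <= y <= 1) (Hyc : y * INR m = INR c).

(* Past the mode the ratio (m-k) y / ((k+1)(1-y)) is at most 1 ... *)
Lemma bern_step_down k : (c <= k < m)%nat -> bern m (S k) y <= bern m k y.
Proof.
intros Hk. pose proof (bern_succ_ratio m k y ltac:(lia)) as Hrat.
pose proof (bern_nonneg m k y Hy). pose proof (bern_nonneg m (S k) y Hy).
assert (Hck : INR c <= INR k) by (apply le_INR; lia).
assert (Hkm : INR k + 1 <= INR m) by (rewrite <- S_INR; apply le_INR; lia).
rewrite minus_INR, S_INR in Hrat by lia.
assert (Hy1 : y < 1) by (pose proof (pos_INR k); nra).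
assert (Hpos : 0 < (INR k + 1) * (1 - y)) by (pose proof (pos_INR k); nra).
assert (Hcmp : (INR m - INR k) * y <= (INR k + 1) * (1 - y)) by nra.
apply (Rmult_le_reg_r ((INR k + 1) * (1 - y))); [exact Hpos|]. nra.
Qed.

(* ... and before it at least 1. *)
Lemma bern_step_up k : (k < c)%nat -> (c <= m)%nat -> bern m k y <= bern m (S k) y.
Proof.
intros Hk Hcm. pose proof (bern_succ_ratio m k y ltac:(lia)) as Hrat.
pose proof (bern_nonneg m k y Hy). pose proof (bern_nonneg m (S k) y Hy).
assert (Hkc : INR k + 1 <= INR c) by (rewrite <- S_INR; apply le_INR; lia).
assert (Hcm' : INR c <= INR m) by (apply le_INR; lia).
rewrite minus_INR, S_INR in Hrat by lia.
assert (Hy0 : 0 < y) by (pose proof (pos_INR k); nra).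
assert (Hpos : 0 < (INR m - INR k) * y) by (apply Rmult_lt_0_compat; lra).
assert (Hcmp : (INR k + 1) * (1 - y) <= (INR m - INR k) * y) by nra.
apply (Rmult_le_reg_r ((INR m - INR k) * y)); [exact Hpos|]. nra.
Qed.

Lemma bern_max_at_mode k : (c <= m)%nat -> (k <= m)%nat -> bern m k y <= bern m c y.
Proof.
intros Hcm Hk.
assert (Hright : forall d, (c + d <= m)%nat -> bern m (c + d) y <= bern m c y).
{ induction d as [|d IH]; intros Hd; [rewrite Nat.add_0_r; lra|].
  rewrite Nat.add_succ_r. eapply Rle_trans; [apply bern_step_down; lia|apply IH; lia]. }
assert (Hleft : forall d, (d <= c)%nat -> bern m (c - d) y <= bern m c y).
{ induction d as [|d IH]; intros Hd; [rewrite Nat.sub_0_r; lra|].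
  eapply Rle_trans; [|apply IH; lia].
  replace (c - d)%nat with (S (c - S d)) by lia. apply bern_step_up; lia. }
destruct (le_lt_dec c k) as [Hle|Hlt].
- replace k with (c + (k - c))%nat by lia. apply Hright. lia.
- replace k with (c - (c - k))%nat by lia. apply Hleft. lia.
Qed.

End Mode.

(* Mode lower bound: the largest of the m+1 terms of a partition of unity is
   at least 1/(m+1). *)
Lemma bern_mode_lower m c : (c <= m)%nat -> (1 <= m)%nat ->
  1 <= INR (S m) * bern m c (INR c / INR m).
Proof.
intros Hc Hm.
assert (HmR : 0 < INR m) by (apply lt_0_INR; lia).
assert (HcR : INR c <= INR m) by (apply le_INR; lia).
set (y := INR c / INR m).
assert (Hyc : y * INR m = INR c) by (unfold y; field; lra).
assert (Hy : 0 <= y <= 1) by (pose proof (pos_INR c); split; nra).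
rewrite <- (bern_partition m y) at 1.
replace (INR (S m) * bern m c y) with (sum_f_R0 (fun _ => bern m c y) m)
  by (rewrite sum_cte; ring).
apply sum_Rle. intros k Hk. apply (bern_max_at_mode m c y); auto.
Qed.

Lemma exp_pow_INR w k : exp w ^ k = exp (INR k * w).
Proof.
induction k as [|k IH].
- simpl. rewrite Rmult_0_l, exp_0. reflexivity.
- simpl pow. rewrite IH, S_INR, <- exp_plus. f_equal. ring.
Qed.

(* z^k <= e^{k(z-1)}, from 1 + x <= e^x. *)
Lemma pow_le_exp z k : 0 <= z -> z ^ k <= exp (INR k * (z - 1)).
Proof.
intros Hz. rewrite <- exp_pow_INR. apply pow_incr. split; auto.
pose proof (exp_ineq1_le (z - 1)). lra.
Qed.

Lemma bern_tilt m c u v : 0 <= u <= 1 -> 0 < v < 1 -> (c <= m)%nat ->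
  bern m c u <= bern m c v * exp ((u - v) * (INR c - INR m * v) / (v * (1 - v))).
Proof.
intros Hu Hv Hc.
assert (Hexp : (u - v) * (INR c - INR m * v) / (v * (1 - v)) =
   INR c * (u / v - 1) + INR (m - c) * ((1 - u) / (1 - v) - 1))
  by (rewrite minus_INR by auto; field; lra).
assert (Hu' : u ^ c = v ^ c * (u / v) ^ c)
  by (rewrite <- Rpow_mult_distr; f_equal; field; lra).
assert (Hu'' : (1 - u) ^ (m - c) = (1 - v) ^ (m - c) * ((1 - u) / (1 - v)) ^ (m - c))
  by (rewrite <- Rpow_mult_distr; f_equal; field; lra).
assert (P1 : (u / v) ^ c <= exp (INR c * (u / v - 1)))
  by (apply pow_le_exp, Rdiv_le_0_compat; lra).
assert (P2 : ((1 - u) / (1 - v)) ^ (m - c) <= exp (INR (m - c) * ((1 - u) / (1 - v) - 1)))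
  by (apply pow_le_exp, Rdiv_le_0_compat; lra).
assert (0 <= (u / v) ^ c) by (apply pow_le, Rdiv_le_0_compat; lra).
assert (0 <= ((1 - u) / (1 - v)) ^ (m - c)) by (apply pow_le, Rdiv_le_0_compat; lra).
pose proof (bern_nonneg m c v ltac:(lra)) as Hb.
rewrite Hexp, exp_plus.
transitivity (bern m c v * ((u / v) ^ c * ((1 - u) / (1 - v)) ^ (m - c)));
  [right; unfold bern; rewrite Hu', Hu''; ring|].
apply Rmult_le_compat_l; [exact Hb|]. apply Rmult_le_compat; auto.
Qed.

Lemma bern_upper_exp m c u x : 0 <= u <= 1 -> 0 < x < 1 -> (c <= m)%nat ->
  bern m c u <= exp ((u - x) * (INR c - INR m * x) / (x * (1 - x))).
Proof.
intros Hu Hx Hc.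
eapply Rle_trans; [apply (bern_tilt m c u x); auto|].
rewrite <- (Rmult_1_l (exp _)) at 2. apply Rmult_le_compat_r.
- left. apply exp_pos.
- apply bern_le_1; auto. lra.
Qed.

(* Gaussian-type lower bound, tilting from the mode c/m:
   B_{m,c}(b) >= exp(-(c-mb)^2/(m b(1-b))) / (m+1). *)
Lemma bern_lower_exp m c b : 0 < b < 1 -> (c <= m)%nat -> (1 <= m)%nat ->
  1 <= INR (S m) * bern m c b * exp ((INR c - INR m * b) ^ 2 / (INR m * (b * (1 - b)))).
Proof.
intros Hb Hc Hm.
assert (HmR : 0 < INR m) by (apply lt_0_INR; lia).
set (y := INR c / INR m).
assert (Hyc : y * INR m = INR c) by (unfold y; field; lra).
assert (Hy : 0 <= y <= 1)
  by (assert (INR c <= INR m) by (apply le_INR; lia); pose proof (pos_INR c); split; nra).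
pose proof (bern_tilt m c y b Hy Hb Hc) as Htilt.
replace ((y - b) * (INR c - INR m * b) / (b * (1 - b)))
  with ((INR c - INR m * b) ^ 2 / (INR m * (b * (1 - b)))) in Htilt
  by (rewrite <- Hyc; field; split; lra).
eapply Rle_trans; [apply (bern_mode_lower m c Hc Hm)|].
rewrite Rmult_assoc. apply Rmult_le_compat_l; [apply pos_INR|exact Htilt].
Qed.

Lemma bern_ratio_same m c a b : 0 < a < 1 -> 0 < b < 1 -> (c <= m)%nat ->
  bern m c a / bern m c b <= exp ((a - b) * (INR c - INR m * b) / (b * (1 - b))).
Proof.
intros Ha Hb Hc. pose proof (bern_pos m c b Hb).
apply (Rmult_le_reg_r (bern m c b)); [lra|].
unfold Rdiv. rewrite Rmult_assoc, Rinv_l, Rmult_1_r, Rmult_comm by lra.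
apply bern_tilt; auto. lra.
Qed.

Lemma bern_ratio_cross m cj ci a b x : 0 < a < 1 -> 0 < b < 1 -> 0 < x < 1 ->
  (cj <= m)%nat -> (ci <= m)%nat -> (1 <= m)%nat ->
  bern m cj a / bern m ci b <=
  INR (S m) * exp ((a - x) * (INR cj - INR m * x) / (x * (1 - x)) +
                   (INR ci - INR m * b) ^ 2 / (INR m * (b * (1 - b)))).
Proof.
intros Ha Hb Hx Hcj Hci Hm.
pose proof (bern_pos m ci b Hb) as Hpos.
pose proof (bern_upper_exp m cj a x ltac:(lra) Hx Hcj) as Hup.
pose proof (bern_lower_exp m ci b Hb Hci Hm) as Hlow.
set (E1 := (a - x) * (INR cj - INR m * x) / (x * (1 - x))) in *.
set (E2 := (INR ci - INR m * b) ^ 2 / (INR m * (b * (1 - b)))) in *.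
pose proof (exp_pos E1). pose proof (bern_nonneg m cj a ltac:(lra)).
apply (Rmult_le_reg_r (bern m ci b)); [exact Hpos|].
unfold Rdiv. rewrite Rmult_assoc, Rinv_l, Rmult_1_r, exp_plus by lra.
transitivity (exp E1 * (INR (S m) * bern m ci b * exp E2)); [|right; ring].
rewrite <- (Rmult_1_r (bern m cj a)). apply Rmult_le_compat; lra.
Qed.

Definition follows (c : nat -> nat) (g K : R) : Prop :=
  forall n, (1 <= n)%nat -> (c n <= n - 1)%nat /\ Rabs (INR (c n) - INR (n - 1) * g) <= K.

Lemma lim_inv_n : is_lim_seq (fun n => / INR n) 0.
Proof.
exact (is_lim_seq_inv INR p_infty is_lim_seq_INR ltac:(discriminate)).
Qed.

(* n e^{K - kappa n} -> 0, via e^z >= z^2/2. *)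
Lemma lim_n_exp_decay kap K : 0 < kap ->
  is_lim_seq (fun n => INR n * exp (K - kap * INR n)) 0.
Proof.
intros Hk.
apply (is_lim_seq_le_le_loc (fun _ => 0) _ (fun n => (2 * exp K / kap ^ 2) * / INR n)).
- exists 1%nat. intros n Hn.
  assert (HnR : 0 < INR n) by (apply lt_0_INR; lia).
  set (z := kap * INR n).
  assert (Hz : 0 < z) by (unfold z; nra).
  assert (Htaylor : z ^ 2 / 2 <= exp z).
  { pose proof (exp_ge_taylor z 2 ltac:(lra)) as T. simpl in T. unfold Rdiv in *. simpl. nra. }
  assert (Hsplit : exp (K - z) = exp K / exp z)
    by (unfold Rminus; rewrite exp_plus, exp_Ropp; reflexivity).
  rewrite Hsplit. pose proof (exp_pos K). pose proof (exp_pos z).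
  split; [apply Rmult_le_pos; [lra|apply Rdiv_le_0_compat; lra]|].
  apply (Rmult_le_reg_r (exp z * (kap ^ 2 * INR n))).
  { apply Rmult_lt_0_compat; [|apply Rmult_lt_0_compat; [apply pow_lt|]]; lra. }
  transitivity (z ^ 2 * exp K).
  { right. replace (z ^ 2) with (kap ^ 2 * INR n ^ 2) by (unfold z; ring).
    field. lra. }
  transitivity (2 * exp K * exp z); [|right; field; lra].
  apply (Rmult_le_compat_r (exp K)) in Htaylor; lra.
- apply is_lim_seq_const.
- replace (Finite 0) with (Rbar_mult (2 * exp K / kap ^ 2) 0) by (simpl; f_equal; ring).
  apply is_lim_seq_scal_l, lim_inv_n.
Qed.

Lemma lim_exp_dominated (u : nat -> R) kap K N : 0 < kap ->
  (forall n, (N <= n)%nat -> 0 <= u n <= INR n * exp (K - kap * INR n)) ->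
  is_lim_seq u 0.
Proof.
intros Hk Hu.
apply (is_lim_seq_le_le_loc (fun _ => 0) _ (fun n => INR n * exp (K - kap * INR n))).
- exists N. exact Hu.
- apply is_lim_seq_const.
- apply lim_n_exp_decay. exact Hk.
Qed.

Lemma exp_le_mono x y : x <= y -> exp x <= exp y.
Proof. intros [H|H]; [left; apply exp_increasing; auto|right; subst; auto]. Qed.

Lemma lim_ratio_same (a b g K : R) (c : nat -> nat) :
  0 < a < 1 -> 0 < b < 1 -> 0 < (a - b) * (b - g) -> follows c g K ->
  is_lim_seq (fun n => bern (n - 1) (c n) a / bern (n - 1) (c n) b) 0.
Proof.
intros Ha Hb Hab Hc.
set (q := / (b * (1 - b))).
assert (Hq : 0 < q) by (unfold q; apply Rinv_0_lt_compat; nra).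
set (kap := (a - b) * (b - g) * q).
assert (Hk : 0 < kap) by (unfold kap; nra).
apply (lim_exp_dominated _ kap (Rabs (a - b) * K * q + kap) 1%nat Hk).
intros n Hn. destruct (Hc n Hn) as [Hcn HK].
pose proof (bern_pos (n - 1) (c n) a Ha). pose proof (bern_pos (n - 1) (c n) b Hb).
split; [apply Rdiv_le_0_compat; lra|].
eapply Rle_trans; [apply bern_ratio_same; auto|].
assert (Hn1 : 1 <= INR n) by (apply (le_INR 1); auto).
rewrite minus_INR in HK |- * by auto. simpl INR in HK |- *.
set (e := INR (c n) - (INR n - 1) * g) in *.
assert (Hexp : (a - b) * (INR (c n) - (INR n - 1) * b) / (b * (1 - b)) <=
               Rabs (a - b) * K * q + kap - kap * INR n).
{ replace ((a - b) * (INR (c n) - (INR n - 1) * b) / (b * (1 - b)))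
    with ((a - b) * e * q - kap * (INR n - 1)) by (unfold e, kap, q; field; lra).
  assert ((a - b) * e <= Rabs (a - b) * K).
  { eapply Rle_trans; [apply Rle_abs|]. rewrite Rabs_mult.
    apply Rmult_le_compat_l; [apply Rabs_pos|exact HK]. }
  nra. }
apply exp_le_mono in Hexp. pose proof (exp_pos (Rabs (a - b) * K * q + kap - kap * INR n)).
nra.
Qed.

Lemma far_exponent_bound a g m c K : 0 < a < 1 -> 0 <= g <= 1 -> 0 <= m ->
  Rabs (c - m * g) <= K ->
  let x := (a + g) / 2 in
  (a - x) * (c - m * x) / (x * (1 - x)) <= - m * (a - g) ^ 2 + K / (x * (1 - x)).
Proof.
intros Ha Hg Hm HK x.
assert (Hx : 0 < x < 1) by (unfold x; lra).
set (q := / (x * (1 - x))).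
assert (Hq : 4 <= q).
{ unfold q. replace 4 with (/ (1 / 4)) by field.
  pose proof (pow2_ge_0 (x - 1 / 2)). apply Rinv_le_contravar; nra. }
set (e := c - m * g) in *.
replace ((a - x) * (c - m * x) / (x * (1 - x)))
  with ((- m * (a - g) ^ 2 / 4) * q + (a - x) * e * q) by (unfold e, q, x; field; lra).
unfold Rdiv. fold q.
assert (Hae : (a - x) * e <= K).
{ eapply Rle_trans; [apply Rle_abs|]. rewrite Rabs_mult.
  assert (Rabs (a - x) <= 1) by (apply Rabs_le; unfold x; lra).
  pose proof (Rabs_pos (a - x)). pose proof (Rabs_pos e). nra. }
assert (0 <= m * (a - g) ^ 2) by (apply Rmult_le_pos; [lra|apply pow2_ge_0]).
nra.
Qed.

Lemma near_exponent_bound b g m c K : 0 < b < 1 -> 0 <= g <= 1 -> 1 <= m ->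
  Rabs (c - m * g) <= K ->
  (c - m * b) ^ 2 / (m * (b * (1 - b))) <= (m * (g - b) ^ 2 + 2 * K + K ^ 2) / (b * (1 - b)).
Proof.
intros Hb Hg Hm HK.
set (e := c - m * g) in *.
replace ((c - m * b) ^ 2 / (m * (b * (1 - b))))
  with ((m * (g - b) + e) ^ 2 / m / (b * (1 - b))) by (unfold e; field; split; lra).
unfold Rdiv at 1 3. apply Rmult_le_compat_r; [apply Rlt_le, Rinv_0_lt_compat; nra|].
apply (Rmult_le_reg_r m); [lra|].
replace ((m * (g - b) + e) ^ 2 / m * m) with ((m * (g - b) + e) ^ 2) by (field; lra).
assert (He : - K <= e <= K) by (apply Rabs_le_between; exact HK).
assert (P1 : (g - b) * e <= K) by nra.
assert (P2 : m * ((g - b) * e) <= m * K) by (apply Rmult_le_compat_l; lra).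
assert (P3 : e ^ 2 <= K ^ 2) by nra.
assert (P4 : K ^ 2 <= K ^ 2 * m) by (pose proof (pow2_ge_0 K); nra).
nra.
Qed.

Lemma lim_ratio_cross (a b gj gi Kj Ki : R) (cj ci : nat -> nat) :
  0 < a < 1 -> 0 < b < 1 -> 0 <= gj <= 1 -> 0 <= gi <= 1 ->
  0 < (a - gj) ^ 2 - (gi - b) ^ 2 / (b * (1 - b)) ->
  follows cj gj Kj -> follows ci gi Ki ->
  is_lim_seq (fun n => bern (n - 1) (cj n) a / bern (n - 1) (ci n) b) 0.
Proof.
intros Ha Hb Hgj Hgi Hkap Hcj Hci.
set (x := (a + gj) / 2).
assert (Hx : 0 < x < 1) by (unfold x; lra).
set (kap := (a - gj) ^ 2 - (gi - b) ^ 2 / (b * (1 - b))) in *.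
set (K' := Kj / (x * (1 - x)) + (2 * Ki + Ki ^ 2) / (b * (1 - b)) + kap).
apply (lim_exp_dominated _ kap K' 2%nat Hkap).
intros n Hn.
destruct (Hcj n ltac:(lia)) as [Hcjn Bj]. destruct (Hci n ltac:(lia)) as [Hcin Bi].
pose proof (bern_pos (n - 1) (cj n) a Ha). pose proof (bern_pos (n - 1) (ci n) b Hb).
split; [apply Rdiv_le_0_compat; lra|].
eapply Rle_trans; [apply (bern_ratio_cross (n - 1) (cj n) (ci n) a b x); auto; lia|].
replace (S (n - 1)) with n by lia.
apply Rmult_le_compat_l; [apply pos_INR|]. apply exp_le_mono.
assert (Hm : 1 <= INR (n - 1)) by (apply (le_INR 1); lia).
pose proof (far_exponent_bound a gj (INR (n - 1)) (INR (cj n)) Kj Ha Hgj ltac:(lra) Bj) as Hfar.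
pose proof (near_exponent_bound b gi (INR (n - 1)) (INR (ci n)) Ki Hb Hgi Hm Bi) as Hnear.
fold x in Hfar.
assert (Hn1 : INR (n - 1) = INR n - 1) by (rewrite minus_INR by lia; reflexivity).
assert (Hsum : - INR (n - 1) * (a - gj) ^ 2 + Kj / (x * (1 - x)) +
               (INR (n - 1) * (gi - b) ^ 2 + 2 * Ki + Ki ^ 2) / (b * (1 - b)) =
               K' - kap * INR n) by (unfold K', kap; rewrite Hn1; field; nra).
lra.
Qed.

Lemma floor_index_follows (g : R) (gs : nat -> R) C :
  (forall n, 0 <= gs n <= 1) ->
  (forall n, (0 < n)%nat -> Rabs (gs n - g) <= C / INR n) ->
  follows (fun n => floor_index n (gs n)) g (1 + C).
Proof.
intros Hgs HC.
assert (HC0 : 0 <= C).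
{ pose proof (HC 1%nat ltac:(lia)) as H1. rewrite Rdiv_1_r in H1.
  pose proof (Rabs_pos (gs 1%nat - g)). lra. }
intros n Hn. destruct n as [|m]; [lia|].
destruct (floor_index_spec m (gs (S m)) (Hgs (S m))) as [_ [Hc Hfl]].
replace (S m - 1)%nat with m by lia. split; [exact Hc|].
pose proof (HC (S m) ltac:(lia)) as Hrate.
assert (HS : 0 < INR (S m)) by (apply lt_0_INR; lia).
assert (Hdrift : Rabs (INR m * (gs (S m) - g)) <= C).
{ rewrite Rabs_mult, (Rabs_right (INR m)) by (apply Rle_ge, pos_INR).
  assert (Hmm : INR m <= INR (S m)) by (apply le_INR; lia).
  apply (Rmult_le_compat_l (INR m)) in Hrate; [|apply pos_INR].
  eapply Rle_trans; [exact Hrate|].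
  replace (INR m * (C / INR (S m))) with (C * (INR m / INR (S m))) by (field; lra).
  assert (INR m / INR (S m) <= 1).
  { apply (Rmult_le_reg_r (INR (S m))); [lra|]. field_simplify; lra. }
  pose proof (pos_INR m). nra. }
replace (INR (floor_index (S m) (gs (S m))) - INR m * g) with
  ((INR (floor_index (S m) (gs (S m))) - INR m * gs (S m)) + INR m * (gs (S m) - g)) by ring.
eapply Rle_trans; [apply Rabs_triang|]. lra.
Qed.

Lemma lim_sum_null (f : nat -> nat -> R) N :
  (forall j, (j <= N)%nat -> is_lim_seq (f j) 0) ->
  is_lim_seq (fun n => sum_f_R0 (fun j => f j n) N) 0.
Proof.
induction N as [|N IH]; intros Hf; simpl.
- apply Hf. lia.
- replace (Finite 0) with (Rbar_plus 0 0) by (simpl; f_equal; ring).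
  apply is_lim_seq_plus'; [apply IH; intros; apply Hf|apply Hf]; lia.
Qed.

Lemma ratio_le_termwise (w A B : nat -> R) N i :
  (i <= N)%nat -> 0 < w i -> 0 < B i ->
  (forall j, (j <= N)%nat -> 0 <= w j /\ 0 <= A j /\ 0 <= B j) ->
  0 <= sum_f_R0 (fun j => w j * A j) N / sum_f_R0 (fun j => w j * B j) N <=
  sum_f_R0 (fun j => w j / w i * (A j / B i)) N.
Proof.
intros Hi Hw HB Hpos.
assert (HSA : 0 <= sum_f_R0 (fun j => w j * A j) N).
{ apply sum_nonneg. intros j Hj. destruct (Hpos j Hj) as [? [? ?]]. apply Rmult_le_pos; auto. }
assert (HSB : w i * B i <= sum_f_R0 (fun j => w j * B j) N).
{ apply (sum_ge_term (fun j => w j * B j)); [|exact Hi].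
  intros j Hj. destruct (Hpos j Hj) as [? [? ?]]. apply Rmult_le_pos; auto. }
assert (Hden : 0 < w i * B i) by (apply Rmult_lt_0_compat; auto).
replace (sum_f_R0 (fun j => w j / w i * (A j / B i)) N)
  with (sum_f_R0 (fun j => w j * A j) N / (w i * B i)).
- split; [apply Rdiv_le_0_compat; lra|].
  unfold Rdiv. apply Rmult_le_compat_l; [exact HSA|]. apply Rinv_le_contravar; lra.
- unfold Rdiv at 1. rewrite Rmult_comm, scal_sum. apply sum_eq. intros j _. field. lra.
Qed.

Lemma mix_ratio_le p (alpha : nat -> R) gn i a b n :
  (i < p)%nat -> (forall j, (j < p)%nat -> 0 < alpha j) ->
  (forall j n, (j < p)%nat -> 0 <= gn j n <= 1) ->
  0 < a < 1 -> 0 < b < 1 -> (1 <= n)%nat ->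
  0 <= Derive (phi_mix p alpha gn n) a / Derive (phi_mix p alpha gn n) b <=
  sum_f_R0 (fun j => alpha j / alpha i *
    (bern (n - 1) (floor_index n (gn j n)) a / bern (n - 1) (floor_index n (gn i n)) b)) (p - 1).
Proof.
intros Hi Hal Hgn Ha Hb Hn. destruct n as [|m]; [lia|].
rewrite !mix_derive by (intros; apply Hgn; lia).
replace (S m - 1)%nat with m by lia.
assert (HSm : 0 < INR (S m)) by (apply lt_0_INR; lia).
set (SA := sum_f_R0 (fun j => alpha j * bern m (floor_index (S m) (gn j (S m))) a) (p - 1)).
set (SB := sum_f_R0 (fun j => alpha j * bern m (floor_index (S m) (gn j (S m))) b) (p - 1)).
assert (Hcancel : INR (S m) * SA / (INR (S m) * SB) = SA / SB).
{ unfold Rdiv. rewrite Rinv_mult.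
  transitivity (SA * / SB * (INR (S m) * / INR (S m))); [ring|].
  rewrite Rinv_r by lra. ring. }
rewrite Hcancel. unfold SA, SB.
apply ratio_le_termwise; [lia|apply Hal; exact Hi|apply bern_pos; exact Hb|].
intros j Hj. split; [left; apply Hal; lia|]. split; apply bern_nonneg; lra.
Qed.

Lemma separation (p : nat) (gamma : nat -> R) i :
  (forall i j, (i < j < p)%nat -> gamma i < gamma j) -> (i < p)%nat ->
  exists d, 0 < d <= 1 /\
    forall j, (j < p)%nat -> j <> i -> d <= Rabs (gamma j - gamma i).
Proof.
intros Hmono Hi.
assert (Hpref : forall N, exists d, 0 < d <= 1 /\
   forall j, (j < N)%nat -> (j < p)%nat -> j <> i -> d <= Rabs (gamma j - gamma i)).
{ induction N as [|N [d [Hd Hsep]]].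
  - exists 1. split; [lra|]. intros; lia.
  - destruct (lt_dec N p) as [HN|HN]; [destruct (Nat.eq_dec N i) as [HNi|HNi]|].
    + exists d. split; auto. intros j Hj Hjp Hji. apply Hsep; auto. lia.
    + set (dN := Rabs (gamma N - gamma i)).
      assert (HdN : 0 < dN).
      { apply Rabs_pos_lt. destruct (lt_dec N i).
        - pose proof (Hmono N i ltac:(lia)). lra.
        - pose proof (Hmono i N ltac:(lia)). lra. }
      exists (Rmin d dN). split; [split; [apply Rmin_glb_lt|pose proof (Rmin_l d dN)]; lra|].
      intros j Hj Hjp Hji. destruct (Nat.eq_dec j N) as [->|HjN]; [apply Rmin_r|].
      eapply Rle_trans; [apply Rmin_l|]. apply Hsep; auto; lia.
    + exists d. split; auto. intros j Hj Hjp Hji. apply Hsep; auto. lia. }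
destruct (Hpref p) as [d [Hd Hsep]]. exists d. split; auto.
Qed.

Definition toward (g delta a b : R) : Prop :=
  (g - delta < a /\ a < b /\ b < g) \/ (g < b /\ b < a /\ a < g + delta).

(* A positive number below x y whenever x > 0 (for a one-sided choice of
   delta that is vacuous when gamma_i = 0 or 1). *)
Lemma pos_below x y : 0 < y -> exists e, 0 < e /\ (0 < x -> e <= x * y).
Proof.
intros Hy. destruct (Rlt_dec 0 x) as [Hx|Hx].
- exists (x * y). split; [apply Rmult_lt_0_compat|]; auto. lra.
- exists 1. split; [lra|]. intros; lra.
Qed.

Lemma close_below g b d : 0 < b <= g -> g <= 1 -> 0 < d <= 1 ->
  g - b <= g * d ^ 2 / 16 -> (g - b) ^ 2 <= d ^ 2 / 8 * (b * (1 - b)).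
Proof.
intros Hb Hg Hd Hclose.
assert (Hd2 : 0 < d ^ 2 <= 1) by (split; [apply pow_lt|]; nra).
assert (Hg2b : g <= 2 * b) by nra.
assert (Hlin : g - b <= b * d ^ 2 / 8) by nra.
assert (Hsq : (g - b) ^ 2 <= (g - b) * (1 - b)) by nra.
assert ((g - b) * (1 - b) <= b * d ^ 2 / 8 * (1 - b)) by (apply Rmult_le_compat_r; lra).
lra.
Qed.

(* Choice of delta: close enough to gamma_i that b is much closer to gamma_i
   (in the metric (g-b)^2/(b(1-b))) than a is to any other gamma_j. *)
Lemma delta_choice g d : 0 <= g <= 1 -> 0 < d <= 1 ->
  exists delta, 0 < delta /\ delta <= d / 2 /\
    forall a b, 0 < a < 1 -> 0 < b < 1 -> toward g delta a b ->
      (g - b) ^ 2 / (b * (1 - b)) <= d ^ 2 / 8.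
Proof.
intros Hg Hd.
assert (Hd16 : 0 < d ^ 2 / 16) by (pose proof (pow_lt d 2 (proj1 Hd)); lra).
destruct (pos_below g (d ^ 2 / 16) Hd16) as [eL [HeL HeL']].
destruct (pos_below (1 - g) (d ^ 2 / 16) Hd16) as [eR [HeR HeR']].
set (delta := Rmin (d / 2) (Rmin eL eR)).
assert (H1 : delta <= d / 2) by apply Rmin_l.
assert (H2 : delta <= eL) by (eapply Rle_trans; [apply Rmin_r|apply Rmin_l]).
assert (H3 : delta <= eR) by (eapply Rle_trans; [apply Rmin_r|apply Rmin_r]).
exists delta. split; [apply Rmin_glb_lt; [lra|apply Rmin_glb_lt; lra]|]. split; [exact H1|].
intros a b Ha Hb Hconf.
assert (Hbb : 0 < b * (1 - b)) by nra.
apply (Rmult_le_reg_r (b * (1 - b))); [exact Hbb|].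
replace ((g - b) ^ 2 / (b * (1 - b)) * (b * (1 - b))) with ((g - b) ^ 2) by (field; lra).
destruct Hconf as [[Ha1 [Hab Hbg]]|[Hgb [Hba Ha2]]].
- assert (Hg0 : 0 < g) by lra. pose proof (HeL' Hg0).
  apply (close_below g b d); lra.
- assert (Hg1 : 0 < 1 - g) by lra. pose proof (HeR' Hg1).
  replace ((g - b) ^ 2) with (((1 - g) - (1 - b)) ^ 2) by ring.
  replace (b * (1 - b)) with ((1 - b) * (1 - (1 - b))) by ring.
  apply (close_below (1 - g) (1 - b) d); lra.
Qed.

Lemma far_from_other g gj a d : d <= Rabs (gj - g) -> Rabs (a - g) < d / 2 ->
  d ^ 2 / 4 <= (a - gj) ^ 2.
Proof.
intros Hgap Hag.
assert (Hd : 0 <= d / 2) by (pose proof (Rabs_pos (a - g)); lra).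
assert (Hfar : d / 2 <= Rabs (a - gj)).
{ pose proof (Rabs_triang (gj - a) (a - g)) as Htri.
  replace (gj - a + (a - g)) with (gj - g) in Htri by ring.
  rewrite (Rabs_minus_sym gj a) in Htri. lra. }
rewrite <- (pow2_abs (a - gj)).
nra.
Qed.

Theorem proposition5p2 (p : nat) (gamma alpha : nat -> R) (gn : nat -> nat -> R) :
  (0 < p)%nat ->
  (forall i, (i < p)%nat -> 0 <= gamma i <= 1) ->
  (forall i j, (i < j < p)%nat -> gamma i < gamma j) ->
  (forall i, (i < p)%nat -> 0 < alpha i < 1) ->
  sum_f_R0 alpha (p - 1) = 1 ->
  (forall i n, (i < p)%nat -> 0 <= gn i n <= 1) ->
  (forall i, (i < p)%nat -> exists C, forall n, (0 < n)%nat ->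
       Rabs (gn i n - gamma i) <= C / INR n) ->
  forall i, (i < p)%nat ->
    exists delta, 0 < delta /\
      forall a b, 0 < a < 1 -> 0 < b < 1 ->
        ((gamma i - delta < a /\ a < b /\ b < gamma i) \/
         (gamma i < b /\ b < a /\ a < gamma i + delta)) ->
        is_lim_seq (fun n => Derive (phi_mix p alpha gn n) a /
                             Derive (phi_mix p alpha gn n) b) 0.
Proof.
intros _ Hg Hmono Hal _ Hgn Hrate i Hi.
destruct (separation p gamma i Hmono Hi) as [d [Hd Hsep]].
destruct (delta_choice (gamma i) d (Hg i Hi) Hd) as [delta [Hdelta [Hhalf Hnear]]].
exists delta. split; [exact Hdelta|]. intros a b Ha Hb Hconf.
assert (Hfollow : forall j, (j < p)%nat ->
          exists K, follows (fun n => floor_index n (gn j n)) (gamma j) K).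
{ intros j Hj. destruct (Hrate j Hj) as [C HC].
  exists (1 + C). apply floor_index_follows; auto. }
destruct (Hfollow i Hi) as [Ki HKi].
eapply is_lim_seq_le_le_loc; [|apply is_lim_seq_const|apply lim_sum_null].
- exists 1%nat. intros n Hn.
  apply (mix_ratio_le p alpha gn i); auto. intros j Hj. apply Hal. exact Hj.
- intros j Hj. cbv beta.
  replace (Finite 0) with (Rbar_mult (alpha j / alpha i) 0) by (simpl; f_equal; ring).
  apply is_lim_seq_scal_l.
  destruct (Nat.eq_dec j i) as [->|Hji].
  + apply (lim_ratio_same a b (gamma i) Ki); auto. destruct Hconf; nra.
  + destruct (Hfollow j ltac:(lia)) as [Kj HKj].
    apply (lim_ratio_cross a b (gamma j) (gamma i) Kj Ki); auto; [apply Hg; lia|].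
    assert (Hag : Rabs (a - gamma i) < d / 2) by (apply Rabs_def1; destruct Hconf; lra).
    pose proof (far_from_other (gamma i) (gamma j) a d (Hsep j ltac:(lia) Hji) Hag).
    pose proof (Hnear a b Ha Hb Hconf). pose proof (pow_lt d 2 (proj1 Hd)). lra.
Qed.
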